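(* Let $G=(V,E)$ be a finite loopless graph with $V\ne\emptyset$ and edge weights $\mathbf{v}=(v_e)_{e\in E}$, and let $q,q_1,q_2$ be indeterminates. Then \[ Z_G(q_1+q_2,\mathbf{v})=\sum_{W\subseteq V}Z_{G[W]}(q_1,\mathbf{v})\,Z_{G[V\setminus W]}(q_2,\mathbf{v}). \] Moreover, for each $i\in V$, \[ \widehat{Z}_G(q_1+q_2,\mathbf{v})=\sum_{W\subseteq V,\ W\ni i}\widehat{Z}_{G[W]}(q_1,\mathbf{v})\,Z_{G[V\setminus W]}(q_2,\mathbf{v}), \] and in particular \[ Z_G(q,\mathbf{v})=\sum_{W\subseteq V,\ W\ni i}q\,C_{G[W]}(\mathbf{v})\,Z_{G[V\setminus W]}(q,\mathbf{v}). \] Also \[ |V|\,Z_G(q_2,\mathbf{v})=\sum_{\emptyset\ne W\subseteq V}\bigl[(q_1+q_2)|W|-q_1|V|\bigr]\widehat{Z}_{G[W]}(q_1,\mathbf{v})\,Z_{G[V\setminus W]}(q_2,\mathbf{v}). \]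
   Context: For a finite graph $H$: $Z_H(q,\mathbf{v})=\sum_{A\subseteq E(H)}q^{k(A)}\prod_{e\in A}v_e$ with $k(A)$ the number of connected components of $(V(H),A)$; $\widehat{Z}_H(q,\mathbf{v})=\sum_{A\subseteq E(H)}q^{k(A)-1}\prod_{e\in A}v_e$ for $V(H)\ne\emptyset$; $C_H(\mathbf{v})=\sum_{A\subseteq E(H),\,k(A)=1}\prod_{e\in A}v_e$. For the empty graph (no vertices), $Z=1$. $G[W]$ denotes the induced subgraph on $W$. *)

From mathcomp Require Import all_boot all_order all_algebra.
Set Implicit Arguments. Unset Strict Implicit. Unset Printing Implicit Defensive.
Import GRing.Theory.
Local Open Scope ring_scope.

(* A finite loopless multigraph: vertex type V, edge type E, and
   [ends e] gives the two endpoints of edge e (looplessness is a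
   hypothesis of the theorem).  Subgraphs induced by W : {set V}. *)
Section Potts.
Variables (V E : finType) (ends : E -> V * V).

Definition ind_edges (W : {set V}) : {set E} :=
  [set e | ((ends e).1 \in W) && ((ends e).2 \in W)].

Definition adj (W : {set V}) (A : {set E}) : rel V :=
  fun x y => [&& x \in W, y \in W &
     [exists e in A, (ends e == (x, y)) || (ends e == (y, x))]].

Definition ncomp (W : {set V}) (A : {set E}) : nat :=
  #| [set [set y in W | connect (adj W A) x y] | x in W] |.

Variable R : comRingType.
Variable v : E -> R.

Definition Zpot (W : {set V}) (q : R) : R :=
  \sum_(A : {set E} | A \subset ind_edges W)
     q ^+ ncomp W A * \prod_(e in A) v e.

(* \hat Z_{G[W]}(q, v) = sum q^{k(A)-1} ...  (used only for W nonempty) *)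
Definition Zhat (W : {set V}) (q : R) : R :=
  \sum_(A : {set E} | A \subset ind_edges W)
     q ^+ (ncomp W A).-1 * \prod_(e in A) v e.

Definition Cpot (W : {set V}) : R :=
  \sum_(A : {set E} | (A \subset ind_edges W) && (ncomp W A == 1%N))
     \prod_(e in A) v e.
End Potts.

From mathcomp Require Import all_boot all_order all_algebra.
From mathcomp Require Import ring.
Import GRing.Theory.
Local Open Scope ring_scope.
Set Implicit Arguments. Unset Strict Implicit. Unset Printing Implicit Defensive.

(* Multiplying out Z_{G[W]}(q1) Z_{G[V\W]}(q2) gives a sum over the edge sets
   A with no edge between W and V\W; for such an A the set W is a union of
   connected components of (V, A), and the components of (W, A) and of
   (V\W, A) are exactly those components.  Summing over W therefore chooses
   a subset of the k(A) components of (V, A), and the binomial theorem turns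
   the weights into (q1 + q2)^k(A).  Forcing the component of i into W gives
   the identity for \hat Z; at q1 = 0 only connected A survive, which gives
   the expansion through C; and counting the pairs (i, W) with i in W by
   means of the \hat Z identity gives the last one. *)

Section Components.
Variables (V E : finType) (ends : E -> V * V).
Implicit Types (A : {set E}) (W : {set V}) (x y : V) (S : {set {set V}}).

Definition linked A : rel V := connect (adj ends [set: V] A).
Definition comp A x : {set V} := [set y | linked A x y].
Definition comps A : {set {set V}} := comp A @: [set: V].

Definition crossfree W A :=
  [forall e in A, ((ends e).1 \in W) == ((ends e).2 \in W)].

Lemma adj_sym W A : symmetric (adj ends W A).
Proof.
move=> x y; rewrite /adj andbCA; congr (_ && (_ && _)).
by apply: eq_existsb => e; rewrite orbC.
Qed.

Lemma linked_sym A : connect_sym (adj ends [set: V] A).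
Proof. exact/sym_connect_sym/adj_sym. Qed.

Lemma mem_comp A x : x \in comp A x.
Proof. by rewrite inE /linked connect0. Qed.

Lemma comp_linked A x y : linked A x y -> comp A y = comp A x.
Proof.
by move=> lxy; apply/setP => z; rewrite !inE /linked (same_connect (@linked_sym A) lxy).
Qed.

Lemma adjT_ends A e : e \in A -> adj ends [set: V] A (ends e).1 (ends e).2.
Proof.
move=> eA; rewrite /adj !in_setT; apply/existsP; exists e; rewrite eA /=.
by case: (ends e) => a b; rewrite eqxx.
Qed.

Lemma crossfreeT A : crossfree [set: V] A.
Proof. by apply/forall_inP => e _; rewrite !in_setT. Qed.

Lemma crossfreeC W A : crossfree W A -> crossfree (~: W) A.
Proof.
move/forall_inP => cf; apply/forall_inP => e eA; rewrite !inE.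
by move: (cf e eA); do 2 case: (_ \in W).
Qed.

Section Crossfree.
Variables (W : {set V}) (A : {set E}).
Hypothesis cfWA : crossfree W A.

Lemma crossfree_adj x y : adj ends [set: V] A x y -> (x \in W) = (y \in W).
Proof.
move: cfWA => /forall_inP cf; rewrite /adj !in_setT /= => /existsP[e /andP[eA]].
by case/orP => /eqP Ee; move: (cf e eA); rewrite Ee /= => /eqP.
Qed.

Lemma crossfree_linked x y : linked A x y -> (x \in W) = (y \in W).
Proof.
case/connectP => p + ->; elim: p x => //= z p IH x /andP[axz pz].
by rewrite (crossfree_adj axz) IH.
Qed.

Lemma connect_crossfree x y : x \in W -> connect (adj ends W A) x y = linked A x y.
Proof.
move=> xW; apply/idP/idP.
  apply: connect_sub => a b /and3P[_ _ h].
  by apply: connect1; rewrite /adj !in_setT.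
case/connectP => p pxp ->; apply/connectP; exists p => //.
elim: p x xW pxp => //= z p IH x xW /andP[axz pz].
have zW : z \in W by rewrite -(crossfree_adj axz).
by rewrite IH // andbT; move: axz; rewrite /adj xW zW !in_setT.
Qed.

Lemma ncomp_crossfree : ncomp ends W A = #|comp A @: W|.
Proof.
rewrite /ncomp (@eq_in_imset _ _ _ (comp A)) // => x xW.
apply/setP => y; rewrite !inE (connect_crossfree _ xW).
by apply/andP/idP => [[]//|lxy]; rewrite -(crossfree_linked lxy) xW.
Qed.

Lemma comp_imsetC : comp A @: (~: W) = comps A :\: comp A @: W.
Proof.
apply/setP => X; rewrite inE; apply/imsetP/andP.
  case=> x; rewrite inE => xW ->; split; last by rewrite imset_f ?in_setT.
  apply/imsetP => -[y yW eq_comp]; move: (mem_comp A x); rewrite eq_comp inE.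
  by move/crossfree_linked; rewrite yW (negbTE xW).
case=> nX /imsetP[x _ eX]; exists x => //; rewrite inE; apply/negP => xW.
by rewrite eX imset_f in nX.
Qed.

Lemma mem_comp_imset i : (comp A i \in comp A @: W) = (i \in W).
Proof.
apply/imsetP/idP => [[x xW eq_comp]|]; last by exists i.
by move: (mem_comp A i); rewrite eq_comp inE => /crossfree_linked <-.
Qed.

End Crossfree.

Lemma cover_comp_imset W A : (cover (comp A @: W) == W) = crossfree W A.
Proof.
apply/eqP/idP => [eW|cf].
  have linked_ends e : e \in A -> linked A (ends e).1 (ends e).2.
    by move=> eA; apply: connect1; apply: adjT_ends.
  apply/forall_inP => e eA; apply/eqP; rewrite -eW.
  apply/bigcupP/bigcupP => -[X /imsetP[x xW ->]]; rewrite inE => lx;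
    exists (comp A x); rewrite ?imset_f // inE; apply: connect_trans lx _.
    exact: linked_ends.
  by rewrite linked_sym; apply: linked_ends.
apply/setP => y; apply/bigcupP/idP => [[X /imsetP[x xW ->]]|yW].
  by rewrite inE => /(crossfree_linked cf) <-.
by exists (comp A y); rewrite ?imset_f ?mem_comp.
Qed.

Lemma comp_imset_cover A S : S \subset comps A -> comp A @: cover S = S.
Proof.
move=> sSP; apply/setP => X; apply/imsetP/idP.
  case=> y /bigcupP[Y YS yY] ->.
  have /imsetP[x _ eY] := subsetP sSP Y YS.
  by move: yY; rewrite eY inE => /comp_linked ->; rewrite -eY.
move=> XS; have /imsetP[x _ eX] := subsetP sSP X XS; exists x => //.
by apply/bigcupP; exists X => //; rewrite eX mem_comp.
Qed.

(* The W crossed by no edge of A are exactly the unions of components of (V, A). *)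
Lemma reindex_crossfree (M : nmodType) A (F : {set {set V}} -> M) :
  \sum_(W : {set V} | crossfree W A) F (comp A @: W)
  = \sum_(S : {set {set V}} | S \subset comps A) F S.
Proof.
symmetry; rewrite (reindex_onto (fun W => comp A @: W) (fun S => cover S)).
  apply: eq_bigl => W; rewrite cover_comp_imset andbC; case: (crossfree W A) => //=.
  by apply/subsetP => X /imsetP[x _ ->]; rewrite imset_f ?in_setT.
exact: comp_imset_cover.
Qed.

End Components.

Section SubsetSums.
Variables (R : comPzSemiRingType) (T : finType).
Implicit Types (A P X Y : {set T}).

Lemma prodrD_subsets P (a b : T -> R) :
  \prod_(t in P) (a t + b t)
  = \sum_(S : {set T} | S \subset P) \prod_(t in S) a t * \prod_(t in P :\: S) b t.
Proof.
pose a' t := if t \in P then a t else 0.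
pose b' t := if t \in P then b t else 1.
transitivity (\prod_t (a' t + b' t)).
  rewrite big_mkcond; apply: eq_bigr => t _; rewrite /a' /b'.
  by case: (t \in P); rewrite ?add0r.
rewrite bigA_distr (bigID (fun S : {set T} => S \subset P)) /=.
rewrite [X in _ + X]big1 ?addr0; last first.
  by move=> S /subsetPn[t tS tP]; rewrite (bigD1 t) //= tS /a' (negbTE tP) mul0r.
apply: eq_bigr => S sSP; rewrite (bigID (mem S)) /=; congr (_ * _).
  by apply: eq_bigr => t tS; rewrite tS /a' (subsetP sSP t tS).
rewrite [RHS]big_mkcond [LHS]big_mkcond; apply: eq_bigr => t _.
by rewrite !inE /b'; case: (t \in S); case: (t \in P).
Qed.

Lemma exprD_subsets P (q1 q2 : R) :
  (q1 + q2) ^+ #|P| = \sum_(S : {set T} | S \subset P) q1 ^+ #|S| * q2 ^+ #|P :\: S|.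
Proof.
rewrite -prodr_const (prodrD_subsets P (fun=> q1) (fun=> q2)).
by apply: eq_bigr => S _; rewrite !prodr_const.
Qed.

(* Weight 1 on t0 and 0 on its absence make the expansion of \prod (a + b)
   keep only the subsets through t0 and drop one factor q1. *)
Lemma exprD_subsets_mem P t0 (q1 q2 : R) : t0 \in P ->
  (q1 + q2) ^+ #|P|.-1
  = \sum_(S : {set T} | S \subset P)
      (if t0 \in S then q1 ^+ #|S|.-1 * q2 ^+ #|P :\: S| else 0).
Proof.
move=> t0P.
have := prodrD_subsets P (fun t => if t == t0 then 1 else q1)
                         (fun t => if t == t0 then 0 else q2).
rewrite (big_setD1 t0) //= eqxx addr0 mul1r.
rewrite (eq_bigr (fun=> q1 + q2)); last by move=> t /setD1P[/negbTE ->].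
rewrite prodr_const (cardsD1 t0 P) t0P /= => ->.
apply: eq_bigr => S sSP; case t0S: (t0 \in S); last first.
  by rewrite [X in _ * X](big_setD1 t0) ?inE ?t0S //= eqxx mul0r mulr0.
rewrite (big_setD1 t0) //= eqxx mul1r (cardsD1 t0 S) t0S /=.
rewrite (eq_bigr (fun=> q1)); last by move=> t /setD1P[/negbTE ->].
rewrite (eq_bigr (fun=> q2) (P := fun t => t \in P :\: S)); last first.
  by move=> t /setDP[_ tS]; case: eqP tS => // ->; rewrite t0S.
by rewrite !prodr_const.
Qed.

Lemma mulr_sum_subsets X Y (F G : {set T} -> R) : [disjoint X & Y] ->
  (\sum_(B : {set T} | B \subset X) F B) * (\sum_(C : {set T} | C \subset Y) G C)
  = \sum_(A : {set T} | A \subset X :|: Y) F (A :&: X) * G (A :&: Y).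
Proof.
move=> dXY; rewrite big_distrlr /= pair_big_dep /=; symmetry.
rewrite (reindex_onto (fun p : {set T} * {set T} => p.1 :|: p.2)
                      (fun A => (A :&: X, A :&: Y))) /=; last first.
  by move=> A sA; rewrite -setIUr; apply/setIidPl.
have setUI (B C Z Z' : {set T}) : B \subset Z -> C \subset Z' -> [disjoint Z' & Z] ->
    (B :|: C) :&: Z = B.
  move=> sBZ sCZ' dZ; rewrite setIUl (setIidPl sBZ).
  by rewrite (disjoint_setI0 (disjointWl sCZ' dZ)) setU0.
have dYX : [disjoint Y & X] by rewrite disjoint_sym.
apply: eq_big => [[B C]|[B C]] /=.
  apply/andP/andP => [[_ /eqP [<- <-]]|[sB sC]]; first by rewrite !subsetIr.
  by rewrite setUSS // (setUI _ _ _ _ sB sC dYX) setUC (setUI _ _ _ _ sC sB dXY).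
by case/andP => _ /eqP[-> ->].
Qed.

Lemma prodr_setIU A X Y (F : T -> R) : A \subset X :|: Y -> [disjoint X & Y] ->
  \prod_(t in A :&: X) F t * \prod_(t in A :&: Y) F t = \prod_(t in A) F t.
Proof.
move=> sA dXY; rewrite [RHS](big_setID X); congr (_ * _); apply: eq_bigl => t.
rewrite !inE; case tA: (t \in A); rewrite ?andbT ?andbF //.
move/subsetP/(_ t tA): sA; rewrite inE.
by case tX: (t \in X) => //=; rewrite (disjointFr dXY tX).
Qed.

End SubsetSums.

Section PartitionFunctions.
Variables (V E : finType) (ends : E -> V * V) (R : comRingType) (v : E -> R).
Implicit Types (A : {set E}) (W : {set V}) (q : R).

Lemma adj_setI_ind_edges W A : adj ends W (A :&: ind_edges ends W) =2 adj ends W A.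
Proof.
move=> x y; rewrite /adj; case xW: (x \in W); case yW: (y \in W) => //=.
apply: eq_existsb => e; rewrite !inE.
by case: orP => [[]/eqP-> /=|]; rewrite ?xW ?yW ?andbT ?andbF.
Qed.

Lemma ncomp_setI_ind_edges W A : ncomp ends W (A :&: ind_edges ends W) = ncomp ends W A.
Proof.
rewrite /ncomp (@eq_in_imset _ _ _ (fun x => [set y in W | connect (adj ends W A) x y])) //.
by move=> x _; apply/setP => y; rewrite !inE (eq_connect (adj_setI_ind_edges W A)).
Qed.

Lemma disjoint_ind_edgesC W : [disjoint ind_edges ends W & ind_edges ends (~: W)].
Proof. by apply/pred0P => e /=; rewrite !inE; case: (_ \in W); rewrite ?andbF. Qed.

Lemma subset_ind_edgesT A : A \subset ind_edges ends [set: V].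
Proof. by apply/subsetP => e _; rewrite !inE. Qed.

Lemma subset_ind_edgesU W A :
  (A \subset ind_edges ends W :|: ind_edges ends (~: W)) = crossfree ends W A.
Proof.
apply/subsetP/forall_inP => sA e /sA; rewrite !inE;
  by case: ((ends e).1 \in W); case: ((ends e).2 \in W).
Qed.

Lemma mul_sums_ind_edgesC W (f g : nat -> R) :
  (\sum_(A : {set E} | A \subset ind_edges ends W)
     f (ncomp ends W A) * \prod_(e in A) v e) *
  (\sum_(A : {set E} | A \subset ind_edges ends (~: W))
     g (ncomp ends (~: W) A) * \prod_(e in A) v e)
  = \sum_(A : {set E} | crossfree ends W A)
      f (ncomp ends W A) * g (ncomp ends (~: W) A) * \prod_(e in A) v e.
Proof.
rewrite (mulr_sum_subsets _ _ (disjoint_ind_edgesC W)).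
apply: eq_big => A; first by rewrite subset_ind_edgesU.
move=> sA; rewrite !ncomp_setI_ind_edges mulrACA.
by rewrite -mulrA (prodr_setIU _ sA (disjoint_ind_edgesC W)) mulrA.
Qed.

Lemma mul_Zpot_setC W q1 q2 : Zpot ends v W q1 * Zpot ends v (~: W) q2 =
  \sum_(A : {set E} | crossfree ends W A)
    q1 ^+ ncomp ends W A * q2 ^+ ncomp ends (~: W) A * \prod_(e in A) v e.
Proof. exact: (mul_sums_ind_edgesC W (fun n => q1 ^+ n) (fun n => q2 ^+ n)). Qed.

Lemma mul_Zhat_Zpot_setC W q1 q2 : Zhat ends v W q1 * Zpot ends v (~: W) q2 =
  \sum_(A : {set E} | crossfree ends W A)
    q1 ^+ (ncomp ends W A).-1 * q2 ^+ ncomp ends (~: W) A * \prod_(e in A) v e.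
Proof. exact: (mul_sums_ind_edgesC W (fun n => q1 ^+ n.-1) (fun n => q2 ^+ n)). Qed.

Lemma sum_crossfree_exp A q1 q2 :
  \sum_(W : {set V} | crossfree ends W A) q1 ^+ ncomp ends W A * q2 ^+ ncomp ends (~: W) A
  = (q1 + q2) ^+ ncomp ends [set: V] A.
Proof.
rewrite ncomp_crossfree ?crossfreeT // exprD_subsets.
rewrite -(reindex_crossfree ends A (fun S => q1 ^+ #|S| * q2 ^+ #|comps ends A :\: S|)).
apply: eq_bigr => W cf.
by rewrite !ncomp_crossfree ?crossfreeC // comp_imsetC.
Qed.

Lemma sum_crossfree_exp_mem A q1 q2 i :
  \sum_(W : {set V} | (i \in W) && crossfree ends W A)
     q1 ^+ (ncomp ends W A).-1 * q2 ^+ ncomp ends (~: W) A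
  = (q1 + q2) ^+ (ncomp ends [set: V] A).-1.
Proof.
rewrite ncomp_crossfree ?crossfreeT //.
rewrite (exprD_subsets_mem _ _ (imset_f (comp ends A) (in_setT i))).
rewrite -(reindex_crossfree ends A (fun S => if comp ends A i \in S then
            q1 ^+ #|S|.-1 * q2 ^+ #|comps ends A :\: S| else 0)).
rewrite (eq_bigl (fun W => crossfree ends W A && (i \in W))) => [|W]; last first.
  exact: andbC.
rewrite big_mkcondr; apply: eq_bigr => W cf.
by rewrite mem_comp_imset // !ncomp_crossfree ?crossfreeC // comp_imsetC.
Qed.

Lemma Zpot_add q1 q2 : Zpot ends v [set: V] (q1 + q2)
  = \sum_(W : {set V}) Zpot ends v W q1 * Zpot ends v (~: W) q2.
Proof.
under eq_bigr => W _ do rewrite mul_Zpot_setC big_mkcond /=.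
rewrite exchange_big /= /Zpot [LHS](eq_bigl xpredT) => [|A]; last by rewrite subset_ind_edgesT.
by apply: eq_bigr => A _; rewrite -big_mkcond /= -big_distrl /= sum_crossfree_exp.
Qed.

Lemma Zhat_add q1 q2 i : Zhat ends v [set: V] (q1 + q2)
  = \sum_(W : {set V} | i \in W) Zhat ends v W q1 * Zpot ends v (~: W) q2.
Proof.
under eq_bigr => W _ do rewrite mul_Zhat_Zpot_setC big_mkcond /=.
rewrite exchange_big /= /Zhat [LHS](eq_bigl xpredT) => [|A]; last by rewrite subset_ind_edgesT.
by apply: eq_bigr => A _; rewrite -big_mkcondr /= -big_distrl /= sum_crossfree_exp_mem.
Qed.

Lemma ncomp_gt0 W A : W != set0 -> (0 < ncomp ends W A)%N.
Proof.
case/set0Pn => x xW; rewrite /ncomp card_gt0; apply/set0Pn.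
by eexists; apply: imset_f xW.
Qed.

Lemma Zpot_Zhat W q : W != set0 -> Zpot ends v W q = q * Zhat ends v W q.
Proof.
move=> W0; rewrite /Zpot /Zhat mulr_sumr; apply: eq_bigr => A _.
by rewrite mulrA -exprS prednK // ncomp_gt0.
Qed.

Lemma Zhat0 W : W != set0 -> Zhat ends v W 0 = Cpot ends v W.
Proof.
move=> W0; rewrite /Zhat /Cpot big_mkcondr; apply: eq_bigr => A _.
rewrite expr0n; have := ncomp_gt0 A W0.
by case: (ncomp ends W A) => [|[|k]] //= _; rewrite ?mul1r ?mul0r.
Qed.

Lemma Zpot_set0 q : Zpot ends v set0 q = 1.
Proof.
rewrite /Zpot (eq_bigl (pred1 set0)) => [|A]; last first.
  by rewrite /= -subset0; apply/eq_subset_r => e; rewrite !inE.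
by rewrite big_pred1_eq big_set0 mulr1 /ncomp imset0 cards0.
Qed.

Lemma Zpot_sum_Cpot q i : Zpot ends v [set: V] q
  = \sum_(W : {set V} | i \in W) q * Cpot ends v W * Zpot ends v (~: W) q.
Proof.
have VN : [set: V] != set0 by apply/set0Pn; exists i.
rewrite Zpot_Zhat // -[q in Zhat _ _ _ q]add0r (Zhat_add 0 q i) mulr_sumr.
by apply: eq_bigr => W iW; rewrite Zhat0 ?mulrA //; apply/set0Pn; exists i.
Qed.

Lemma sum_card_mul_Zhat q1 q2 :
  \sum_(W : {set V} | W != set0) #|W|%:R * (Zhat ends v W q1 * Zpot ends v (~: W) q2)
  = #|V|%:R * Zhat ends v [set: V] (q1 + q2).
Proof.
rewrite big_mkcond /= (eq_bigr (fun W : {set V} => \sum_(i in W)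
          Zhat ends v W q1 * Zpot ends v (~: W) q2)) => [|W _]; last first.
  by case: eqP => [->|_]; rewrite ?big_set0 // sumr_const mulr_natl.
rewrite (exchange_big_dep predT) //= -sum1_card natr_sum mulr_suml.
by apply: eq_bigr => i _; rewrite mul1r (Zhat_add _ _ i).
Qed.

Lemma sum_nonempty_mul_Zpot q1 q2 :
  \sum_(W : {set V} | W != set0) Zpot ends v W q1 * Zpot ends v (~: W) q2
  = Zpot ends v [set: V] (q1 + q2) - Zpot ends v [set: V] q2.
Proof. by rewrite Zpot_add [in RHS](bigD1 set0) //= Zpot_set0 setC0 mul1r addrC addrK. Qed.

Lemma card_mul_Zpot q1 q2 :
  #|V|%:R * Zpot ends v [set: V] q2
  = \sum_(W : {set V} | W != set0)
      ((q1 + q2) * #|W|%:R - q1 * #|V|%:R) * Zhat ends v W q1 * Zpot ends v (~: W) q2.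
Proof.
have [VT0|VN] := eqVneq [set: V] set0.
  rewrite -cardsT VT0 cards0 mul0r big_pred0 // => W.
  by apply/negbTE; rewrite negbK -subset0 -VT0 subsetT.
rewrite (eq_bigr (fun W : {set V} =>
    (q1 + q2) * (#|W|%:R * (Zhat ends v W q1 * Zpot ends v (~: W) q2))
    - #|V|%:R * (Zpot ends v W q1 * Zpot ends v (~: W) q2))) => [|W W0]; last first.
  by rewrite (Zpot_Zhat q1 W0); ring.
rewrite sumrB -!mulr_sumr sum_card_mul_Zhat sum_nonempty_mul_Zpot !(Zpot_Zhat _ VN).
ring.
Qed.

End PartitionFunctions.

Unset Implicit Arguments.
Theorem proposition3p7 (R : comRingType) (V E : finType) (ends : E -> V * V)
  (loopless : forall e : E, (ends e).1 != (ends e).2)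
  (Vne : (0 < #|V|)%N) (v : E -> R) (q q1 q2 : R) :
  [/\ Zpot ends v [set: V] (q1 + q2)
        = \sum_(W : {set V}) Zpot ends v W q1 * Zpot ends v (~: W) q2,
      (forall i : V,
        Zhat ends v [set: V] (q1 + q2)
          = \sum_(W : {set V} | i \in W) Zhat ends v W q1 * Zpot ends v (~: W) q2),
      (forall i : V,
        Zpot ends v [set: V] q
          = \sum_(W : {set V} | i \in W) q * Cpot ends v W * Zpot ends v (~: W) q)
    & (#|V|%:R * Zpot ends v [set: V] q2
        = \sum_(W : {set V} | W != set0)
            ((q1 + q2) * #|W|%:R - q1 * #|V|%:R)
              * Zhat ends v W q1 * Zpot ends v (~: W) q2)].
Proof.
split; [exact: Zpot_add | exact: Zhat_add | exact: Zpot_sum_Cpot | exact: card_mul_Zpot].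
Qed.
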